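(* Let $(X,\mu)$ be a non-atomic probability measure space, $\mathcal{T}$ a tree on $X$, $\mathcal{M}=\mathcal{M}_{\mathcal{T}}$ the associated maximal operator, and $p>1$. For $0<f\le F$ let $$B(f,F)=\sup\Big\{\|\mathcal{M}\phi\|_{p,\infty} : \phi\ge0,\ \int_X\phi\,d\mu=f,\ |||\phi|||_{p,\infty}=F\Big\}.$$ Then $B(f,F)=F$.
   Context: A tree on $(X,\mu)$ is a set $\mathcal{T}$ of measurable subsets of $X$ such that: (i) $X\in\mathcal{T}$ and $\mu(I)>0$ for every $I\in\mathcal{T}$; (ii) every $I\in\mathcal{T}$ has an associated finite subset $\mathcal{C}(I)\subseteq\mathcal{T}$ with at least two elements, whose elements are pairwise almost disjoint (i.e. intersections have measure zero) subsets of $I$ with union $I$; (iii) $\mathcal{T}=\bigcup_{m\ge0}\mathcal{T}_{(m)}$ where $\mathcal{T}_{(0)}=\{X\}$ and $\mathcal{T}_{(m+1)}=\bigcup_{I\in\mathcal{T}_{(m)}}\mathcal{C}(I)$; (iv) $\lim_{m\to\infty}\sup_{I\in\mathcal{T}_{(m)}}\mu(I)=0$. The associated maximal operator is $\mathcal{M}_{\mathcal{T}}\phi(x)=\sup\{\frac{1}{\mu(I)}\int_I|\phi|\,d\mu : x\in I\in\mathcal{T}\}$ for $\phi\in L^1(X,\mu)$. $\|g\|_{p,\infty}=\sup\{\lambda\,\mu(\{|g|>\lambda\})^{1/p}:\lambda>0\}$ and $|||\phi|||_{p,\infty}=\sup\{\mu(E)^{-1+1/p}\int_E|\phi|\,d\mu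 : E \text{ measurable}, \mu(E)>0\}$. *)

From HB Require Import structures.
From mathcomp Require Import all_boot all_order all_algebra.
From mathcomp Require Import all_classical all_reals all_analysis.
Set Implicit Arguments. Unset Strict Implicit. Unset Printing Implicit Defensive.
Import Order.TTheory GRing.Theory Num.Theory.
Local Open Scope classical_set_scope.
Local Open Scope ring_scope.

Section Defs.
Context {d : measure_display} {T : measurableType d} {R : realType}.

Definition nonatomic (mu : set T -> \bar R) : Prop :=
  forall A, measurable A -> (0 < mu A)%E ->
    exists B, [/\ measurable B, B `<=` A, (0 < mu B)%E & (mu B < mu A)%E].

Fixpoint tree_level (C : set T -> set (set T)) (m : nat) : set (set T) :=
  match m with
  | 0 => [set setT]
  | m'.+1 => \bigcup_(I in tree_level C m') C I
  end.

Definition is_tree (mu : set T -> \bar R) (Tr : set (set T))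
    (C : set T -> set (set T)) : Prop :=
  [/\ (Tr setT /\ forall I, Tr I -> measurable I /\ (0 < mu I)%E),
      (forall I, Tr I ->
         [/\ finite_set (C I), C I `<=` Tr,
             (exists J K, [/\ C I J, C I K & J <> K]),
             (forall J K, C I J -> C I K -> J <> K -> mu (J `&` K) = 0%E) &
             ((forall J, C I J -> J `<=` I) /\
              \bigcup_(J in C I) J = I)]),
      Tr = \bigcup_(m in [set: nat]) tree_level C m &
      (fun m => ereal_sup [set mu I | I in tree_level C m]) @ \oo --> 0%E].

Definition tree_maximal (mu : {measure set T -> \bar R}) (Tr : set (set T))
    (phi : T -> R) (x : T) : \bar R :=
  ereal_sup [set (((fine (mu I))^-1)%:E * \int[mu]_(y in I) (`|phi y|)%:E)%E
            | I in [set I | Tr I /\ I x]].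

Definition weak_norm (mu : set T -> \bar R) (p : R) (g : T -> \bar R) : \bar R :=
  ereal_sup [set (lambda * powR (fine (mu [set x | (lambda%:E < `|g x|)%E]))
                                 p^-1)%:E
            | lambda in [set lambda : R | 0 < lambda]].

Definition triple_norm (mu : {measure set T -> \bar R}) (p : R) (phi : T -> R)
    : \bar R :=
  ereal_sup [set ((powR (fine (mu E)) (-1 + p^-1))%:E
                 * \int[mu]_(x in E) (`|phi x|)%:E)%E
            | E in [set E | measurable E /\ (0 < mu E)%E]].

Definition bellmanB (mu : {measure set T -> \bar R}) (Tr : set (set T))
    (p f F : R) : \bar R :=
  ereal_sup [set weak_norm mu p (tree_maximal mu Tr phi)
            | phi in [set phi : T -> R |
                 [/\ mu.-integrable setT (EFin \o phi),
                     (forall x, 0 <= phi x),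
                     (\int[mu]_(x in setT) (phi x)%:E = f%:E)%E &
                     triple_norm mu p phi = F%:E]]].

End Defs.

(* Upper bound: a stopping-time argument.  The superlevel set S = {M phi > lam}
   is the union of the maximal tree elements on which the average of |phi|
   exceeds lam; they are pairwise disjoint up to null sets, so
   lam mu(S) <= int_S |phi|, i.e. lam mu(S)^(1/p) <= mu(S)^(-1+1/p) int_S |phi|,
   which is at most |||phi|||.
   Lower bound: take a tree element A of small measure a and let phi be c on A
   and b off A, with c = F a^(-1/p) and b fixed by int phi = f.  Since M phi >= c
   on A, ||M phi||_{p,oo} >= c a^(1/p) = F.  For a test set E the bound
   mu(E)^(-1+1/p) int_E phi <= F follows, when mu(E) > a, from the concavity of
   t |-> t^(1-1/p), whose graph lies above its chord over [a, 1]. *)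

From mathcomp Require Import all_boot all_order all_algebra.
From mathcomp Require Import all_classical all_reals all_analysis.
From mathcomp Require Import measurable_realfun ring lra.
Import Order.TTheory GRing.Theory Num.Theory.
Local Open Scope classical_set_scope.
Local Open Scope ring_scope.
Set Implicit Arguments. Unset Strict Implicit. Unset Printing Implicit Defensive.

Definition maximal_in {T} (G : set (set T)) (I : set T) : Prop :=
  G I /\ forall J, G J -> I `<=` J -> J = I.

Section tree.
Context {d : measure_display} {T : measurableType d} {R : realType}.
Variables (mu : {measure set T -> \bar R}) (Tr : set (set T)).
Variable C : set T -> set (set T).
Hypothesis htree : is_tree mu Tr C.

Lemma tree_setT : Tr setT.
Proof. by case: htree => -[]. Qed.

Lemma tree_measurable I : Tr I -> measurable I.
Proof. by case: htree => -[_ h] _ _ _ /h[]. Qed.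

Lemma tree_measure_gt0 I : Tr I -> (0 < mu I)%E.
Proof. by case: htree => -[_ h] _ _ _ /h[]. Qed.

Lemma tree_level_sub m : tree_level C m `<=` Tr.
Proof. by case: htree => _ _ -> _ I hI; exists m. Qed.

Lemma tree_levelP I : Tr I -> exists m, tree_level C m I.
Proof. by case: htree => _ _ -> _ [m _ hI]; exists m. Qed.

Lemma tree_child_sub I J : Tr I -> C I J -> J `<=` I.
Proof. by case: htree => _ h _ _ /h[_ _ _ _ [+ _]]; apply. Qed.

Lemma tree_level_ancestor k m I : (k <= m)%N -> tree_level C m I ->
  exists2 A, tree_level C k A & I `<=` A.
Proof.
elim: m I => [|m IH] I; first by rewrite leqn0 => /eqP -> hI; exists I.
rewrite leq_eqVlt => /orP[/eqP -> hI|km]; first by exists I.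
case=> P hP hPI; have [A hA PA] := IH P km hP.
exists A => //; apply: subset_trans PA.
exact: tree_child_sub (tree_level_sub hP) hPI.
Qed.

Lemma tree_level_null_inter m I J : tree_level C m I -> tree_level C m J ->
  I <> J -> mu (I `&` J) = 0%E.
Proof.
elim: m I J => [|m IH] I J; first by move=> -> ->.
move=> hI hJ IJ; case: (hI) => P hP hPI; case: (hJ) => Q hQ hQJ.
have TP := tree_level_sub hP; have TQ := tree_level_sub hQ.
have [PQ|PQ] := pselect (P = Q).
  by subst Q; case: htree => _ /(_ P TP)[_ _ _ + _] _ _; apply.
apply: subset_measure0 (IH P Q hP hQ PQ).
- by apply: measurableI; apply: tree_measurable;
    [exact: tree_level_sub hI|exact: tree_level_sub hJ].
- by apply: measurableI; exact: tree_measurable.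
- by apply: setISS; [exact: tree_child_sub TP hPI|exact: tree_child_sub TQ hQJ].
Qed.

Lemma tree_nested I J : Tr I -> Tr J ->
  [\/ I `<=` J, J `<=` I | mu (I `&` J) = 0%E].
Proof.
move=> TI TJ; have [m hI] := tree_levelP TI; have [n hJ] := tree_levelP TJ.
wlog mn : I J m n TI TJ hI hJ / (m <= n)%N.
  move=> W; case: (leqP m n) => [|/ltnW] mn; first exact: W hI hJ mn.
  case: (W J I n m) => // ?; [exact: Or32|exact: Or31|].
  by apply: Or33; rewrite setIC.
have [A hA JA] := tree_level_ancestor mn hJ.
have [<-|AI] := pselect (A = I); first exact: Or32.
apply: Or33; apply: subset_measure0 (tree_level_null_inter hI hA (nesym AI)).
- by apply: measurableI; exact: tree_measurable.
- by apply: measurableI; apply: tree_measurable => //; exact: tree_level_sub hA.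
- exact: setIS.
Qed.

Lemma countable_tree : countable Tr.
Proof.
case: htree => _ hch -> _; apply: bigcup_countable => // m _.
apply: finite_set_countable; elim: m => [|m IH] /=; first exact: finite_set1.
apply: bigcup_finite => // I hI.
by case: (hch I (tree_level_sub hI)).
Qed.

Lemma tree_maximal_in_ub (G : set (set T)) I : G `<=` Tr -> G I ->
  exists2 J, maximal_in G J & I `<=` J.
Proof.
move=> GTr GI; have [m hI] := tree_levelP (GTr I GI).
elim/ltn_ind: m I hI GI => m IH I hI GI.
have [MI|nMI] := pselect (maximal_in G I); first by exists I.
have [J [GJ IJ JI]] : exists J, [/\ G J, I `<=` J & J <> I].
  apply: contrapT => hn; apply: nMI; split => // J GJ IJ.
  by apply: contrapT => JI; apply: hn; exists J.
have [k hJ] := tree_levelP (GTr J GJ).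
case: (ltnP k m) => [km|mk].
  by have [K MK JK] := IH k km J hJ GJ; exists K => //; exact: subset_trans JK.
(* a strictly larger tree element cannot lie at a deeper level *)
have [A hA JA] := tree_level_ancestor mk hJ.
have [AI|AI] := pselect (A = I).
  by subst A; case: JI; apply/seteqP.
have := tree_level_null_inter hI hA (nesym AI).
rewrite setIidl; last exact: subset_trans JA.
by move=> I0; have := tree_measure_gt0 (GTr I GI); rewrite I0 ltxx.
Qed.

Lemma maximal_in_null_inter (G : set (set T)) I J : G `<=` Tr ->
  maximal_in G I -> maximal_in G J -> I <> J -> mu (I `&` J) = 0%E.
Proof.
move=> GTr [GI MI] [GJ MJ] IJ.
by case: (tree_nested (GTr I GI) (GTr J GJ)) => // [/(MI J GJ)|/(MJ I GI)] e;
  case: IJ.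
Qed.

Lemma tree_small (e : R) : 0 < e -> exists2 A, Tr A & (mu A < e%:E)%E.
Proof.
move=> e0; case: htree => _ hch _ /(_ [set y | y < e%:E]%E).
case.
  apply/nbhs_EFin; apply/nbhs_ballP; exists e => //= x.
  by rewrite /ball /= sub0r normrN lte_fin => /(le_lt_trans (ler_norm x)).
move=> N _ /(_ N (leqnn N)) /=.
have [I hI] : exists I, tree_level C N I.
  elim: N => [|m [I hI]]; first by exists setT.
  have [_ _ [J [_ [CJ _ _]]] _ _] := hch I (tree_level_sub hI).
  by exists J; exists I.
move=> hN; exists I; first exact: tree_level_sub hI.
by apply: le_lt_trans hN; apply: ereal_sup_ubound; exists I.
Qed.

Lemma tree_small_powR (q u : R) : 0 < q -> 0 < u <= 1 ->
  exists A, [/\ Tr A, fine (mu A) < 1 & fine (mu A) `^ q <= u].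
Proof.
move=> q0 /andP[u0 u1]; have iq0 : 0 <= q^-1 by rewrite invr_ge0 ltW.
have [A TA muA] : exists2 A, Tr A & (mu A < (u `^ q^-1)%:E)%E.
  by apply: tree_small; rewrite powR_gt0.
have fA : mu A \is a fin_num by rewrite ge0_fin_numE // (lt_trans muA) ?ltey.
have aA : fine (mu A) < u `^ q^-1 by rewrite -lte_fin fineK.
exists A; split => //.
  apply: lt_le_trans aA _; have -> : 1 = 1 `^ q^-1 :> R by rewrite powR1.
  by apply: (ge0_ler_powR iq0) => //; rewrite nnegrE ltW.
rewrite -[leRHS](powRr1 (ltW u0)) -(mulVf (lt0r_neq0 q0)) powRrM.
apply: (ge0_ler_powR (ltW q0)); rewrite ?nnegrE ?fine_ge0 ?powR_ge0 //.
exact: ltW.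
Qed.

End tree.

Section null_inter.
Context {d : measure_display} {T : measurableType d} {R : realType}.
Variable mu : {measure set T -> \bar R}.
Local Open Scope ereal_scope.

Lemma measure_setI_bigsetU0 (A : set T) (B : nat -> set T) n :
  measurable A -> (forall k, measurable (B k)) ->
  (forall k, (k < n)%N -> mu (A `&` B k) = 0) ->
  mu (A `&` \big[setU/set0]_(k < n) B k) = 0.
Proof.
move=> mA mB; elim: n => [|n IH] AB0; first by rewrite big_ord0 setI0 measure0.
have mAU : measurable (A `&` \big[setU/set0]_(k < n) B k).
  by apply: measurableI => //; apply: bigsetU_measurable.
rewrite big_ord_recr /= setIUr measureU0 ?AB0 //; last exact: measurableI.
by apply: IH => k kn; apply: AB0; exact: ltnW.
Qed.

Lemma countable_bigcup_seq (G : set (set T)) : countable G ->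
  exists D : nat -> set T, (forall n, D n = set0 \/ G (D n)) /\
    \bigcup_(I in G) I = \bigcup_n D n.
Proof.
move=> /pcard_surjP[g Gg].
exists (fun n => if `[< G (g n) >] then g n else set0); split.
  by move=> n; case: asboolP; [right|left].
apply/seteqP; split => [x [I GI Ix]|x [n _]].
  by have [n _ gn] := Gg I GI; exists n => //; rewrite asboolT gn.
by case: asboolP => // Ggn gx; exists (g n).
Qed.

Lemma countable_bigcup_measurable (G : set (set T)) : countable G ->
  (forall I, G I -> measurable I) -> measurable (\bigcup_(I in G) I).
Proof.
move=> /countable_bigcup_seq[D [DG ->]] mG.
by apply: bigcupT_measurable => n; case: (DG n) => [->|/mG].
Qed.

Lemma mule_measure_bigcup_le_integral (G : set (set T)) (f : T -> \bar R)
    (lam : R) :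
  (0 <= lam)%R -> measurable_fun setT f -> (forall x, 0 <= f x) ->
  countable G -> (forall I, G I -> measurable I) ->
  (forall I J, G I -> G J -> I <> J -> mu (I `&` J) = 0) ->
  (forall I, G I -> lam%:E * mu I <= \int[mu]_(x in I) f x) ->
  lam%:E * mu (\bigcup_(I in G) I) <= \int[mu]_(x in \bigcup_(I in G) I) f x.
Proof.
move=> lam0 mf f0 /countable_bigcup_seq[D [DG ->]] mG G0 Glam.
have mD n : measurable (D n) by case: (DG n) => [->|/mG].
have Dlam n : lam%:E * mu (D n) <= \int[mu]_(x in D n) f x.
  by case: (DG n) => [->|/Glam//]; rewrite measure0 mule0 integral_set0.
have mDU n : measurable (seqDU D n).
  by apply: measurableD => //; apply: bigsetU_measurable.
have mfU : measurable_fun (\bigcup_n seqDU D n) f by exact: measurable_funTS.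
rewrite seqDU_bigcup_eq measure_semi_bigcup ?ge0_integral_bigcup //;
  last exact: bigcupT_measurable.
rewrite -nneseriesZl //; apply: lee_nneseries => [n _|n _].
  by rewrite mule_ge0 ?lee_fin.
rewrite /seqDU; set U := \big[setU/set0]_(k < n) D k.
have mU : measurable U by apply: bigsetU_measurable.
have [[k kn Dkn]|Dnew] := pselect (exists2 k, (k < n)%N & D k = D n).
  rewrite (_ : D n `\` U = set0) ?measure0 ?mule0 ?integral_set0 //.
  by rewrite setD_eq0 -Dkn; exact: bigsetU_sup.
have DU0 : mu (D n `&` U) = 0.
  apply: measure_setI_bigsetU0 => // k kn.
  case: (DG n) (DG k) => [->|GDn [->|GDk]]; rewrite ?set0I ?setI0 ?measure0 //.
  by apply: G0 => // e; apply: Dnew; exists k.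
have mDnU : measurable (D n `&` U) by exact: measurableI.
have -> : D n `\` U = D n `\` (D n `&` U) by rewrite setDIr setDv set0U.
rewrite -ge0_negligible_integral //; last exact: measurable_funTS.
apply: le_trans (Dlam n); apply: lee_wpmul2l; first by rewrite lee_fin.
by apply: le_measure; rewrite ?inE //; exact: measurableD.
Qed.
End null_inter.

Section power_inequalities.
Variable R : realType.
Implicit Types q r a b c t s w F : R.

Lemma powR_addN1_mul a r : 0 < a -> a `^ (-1 + r) * a = a `^ r.
Proof.
move=> a0; rewrite -{2}(powRr1 (ltW a0)) -powRD; last first.
  by rewrite (gt_eqF a0) implybT.
by rewrite addrAC addNr add0r.
Qed.

Lemma concave_powR q w a b : 0 < q <= 1 -> 0 <= w <= 1 -> 0 <= a -> 0 <= b ->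
  w * a `^ q + (1 - w) * b `^ q <= (w * a + (1 - w) * b) `^ q.
Proof.
move=> /andP[q0 q1] /andP[w0 w1] a0 b0.
have q'1 : 1 <= q^-1 by rewrite invf_ge1.
have := @convex_powR R _ q'1 (Itv01 w0 w1) (a `^ q) (b `^ q).
rewrite !inE /= !in_itv /= !andbT !powR_ge0 => /(_ isT isT).
rewrite convRE [X in X `^ _ <= _]convRE /= /unstable.onem.
rewrite -!powRrM !mulfV ?gt_eqF // !powRr1 // => H.
have := @ge0_ler_powR R q (ltW q0) _ _ _ _ H.
rewrite -powRrM mulVf ?gt_eqF // powRr1.
move=> ler_q; apply: ler_q.
- by rewrite nnegrE powR_ge0.
- by rewrite nnegrE addr_ge0 ?mulr_ge0 ?subr_ge0.
- by rewrite addr_ge0 ?mulr_ge0 ?powR_ge0 ?subr_ge0.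
Qed.

Lemma powR_chord_le q a t : 0 < q <= 1 -> 0 <= a <= t -> t <= 1 ->
  (1 - t) * a `^ q + (t - a) <= (1 - a) * t `^ q.
Proof.
move=> q01 /andP[a0 a_t] t1.
have [a1|a1] := eqVneq a 1.
  have t1' : t = 1 by apply/eqP; rewrite eq_le t1 -a1 a_t.
  by rewrite t1' a1 !subrr !mul0r addr0.
have a1' : 0 < 1 - a by rewrite subr_gt0 lt_neqAle a1 (le_trans a_t).
pose w := (1 - t) / (1 - a).
have w01 : 0 <= w <= 1.
  by rewrite divr_ge0 ?subr_ge0 ?ler_pdivrMr // ?mul1r; lra.
have tw : w * a + (1 - w) * 1 = t.
  by rewrite /w; field; rewrite gt_eqF.
have := concave_powR q01 w01 a0 ler01.
rewrite tw powR1 mulr1 => /(ler_wpM2l (ltW a1')); apply: le_trans.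
rewrite mulrDr /w mulrA mulrCA divff ?gt_eqF // mulr1.
rewrite (_ : (1 - a) * (1 - (1 - t) / (1 - a)) = t - a) //.
by field; rewrite gt_eqF.
Qed.

(* [b * t + (c - b) * s] is the integral over a set E of the function equal to
   c on A and to b elsewhere, where [t = mu E], [s = mu (A `&` E)], [a = mu A]. *)
Lemma step_mass_le r F a b c t s : 0 < r < 1 -> 0 < a < 1 -> 0 < t <= 1 ->
  0 <= s -> s <= t -> s <= a -> 0 <= b <= c ->
  c * a `^ r = F -> c * a = F * a `^ (1 - r) -> b * (1 - a) <= F - c * a ->
  b * t + (c - b) * s <= F * t `^ (1 - r).
Proof.
move=> /andP[r0 r1] /andP[a0 a1] /andP[t0 t1] s0 st sa /andP[b0 bc] cF ca bF.
have F0 : 0 <= F by rewrite -cF mulr_ge0 ?powR_ge0 // (le_trans b0).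
have tr : t `^ r * t `^ (1 - r) = t.
  rewrite -powRD; last by rewrite (gt_eqF t0) implybT.
  by rewrite subrKC powRr1 // ltW.
have [ta|a_t] := leP t a.
  rewrite -cF; apply: (@le_trans _ _ (c * t)); first nra.
  rewrite -[X in c * X]tr mulrA ler_wpM2r ?powR_ge0 //.
  rewrite ler_wpM2l ?(le_trans b0) //.
  by apply: (ge0_ler_powR (ltW r0)) => //; rewrite nnegrE ltW.
have q01 : 0 < 1 - r <= 1 by rewrite subr_gt0 r1 lerBlDr lerDl ltW.
have a0t : 0 <= a <= t by rewrite !ltW.
have := powR_chord_le q01 a0t t1.
set A := a `^ (1 - r); set T := t `^ (1 - r) => chord.
have a1' : 0 < 1 - a by rewrite subr_gt0.
rewrite -(ler_pM2l a1').
have h1 : (c - b) * s <= (c - b) * a by rewrite ler_wpM2l ?subr_ge0.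
have h2 : b * (1 - a) * (t - a) <= (F - c * a) * (t - a).
  by rewrite ler_wpM2r // subr_ge0 ltW.
have h3 : F * ((1 - t) * A + (t - a)) <= F * ((1 - a) * T) by exact: ler_wpM2l.
apply: (@le_trans _ _ ((1 - a) * (c * a) + (F - c * a) * (t - a))); first nra.
rewrite ca (_ : (1 - a) * (F * A) + (F - F * A) * (t - a) =
  F * ((1 - t) * A + (t - a))); last by ring.
by rewrite mulrCA.
Qed.
End power_inequalities.

Section tree_maximal.
Context {d : measure_display} {T : measurableType d} {R : realType}.
Variables (mu : {finite_measure set T -> \bar R}) (Tr : set (set T)).
Variable C : set T -> set (set T).
Hypothesis htree : is_tree mu Tr C.
Variable phi : T -> R.
Local Open Scope ereal_scope.

Definition tree_avg (I : set T) : \bar R :=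
  ((fine (mu I))^-1)%:E * \int[mu]_(y in I) (`|phi y|)%:E.

Lemma tree_avg_ge0 I : 0 <= tree_avg I.
Proof. by rewrite mule_ge0 ?lee_fin ?invr_ge0 ?fine_ge0 // integral_ge0. Qed.

Lemma tree_avg_le_maximal I x : Tr I -> I x ->
  tree_avg I <= tree_maximal mu Tr phi x.
Proof. by move=> TI Ix; apply: ereal_sup_ubound; exists I. Qed.

Lemma tree_maximal_ge0 x : 0 <= tree_maximal mu Tr phi x.
Proof.
apply: le_trans (tree_avg_le_maximal (tree_setT htree) _) => //.
exact: tree_avg_ge0.
Qed.

Lemma tree_maximal_superlevel (lam : R) :
  [set x | lam%:E < `|tree_maximal mu Tr phi x|] =
  \bigcup_(I in [set I | Tr I /\ lam%:E < tree_avg I]) I.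
Proof.
apply/seteqP; split => x /=; rewrite gee0_abs ?tree_maximal_ge0 //.
  by move=> /ereal_sup_gt[_ [I [TI Ix] <-] lI]; exists I.
by case=> I [TI lI] Ix; apply: lt_le_trans lI (tree_avg_le_maximal TI Ix).
Qed.

Lemma measurable_tree_maximal_superlevel (lam : R) :
  measurable [set x | lam%:E < `|tree_maximal mu Tr phi x|].
Proof.
rewrite tree_maximal_superlevel; apply: countable_bigcup_measurable.
  by apply: sub_countable (countable_tree htree); apply: subset_card_le => I [].
by move=> I [TI _]; exact: (tree_measurable (mu := mu) htree TI).
Qed.

Lemma tree_avg_gt_le_integral (lam : R) I : Tr I -> lam%:E < tree_avg I ->
  lam%:E * mu I <= \int[mu]_(y in I) (`|phi y|)%:E.
Proof.
move=> TI; have mI := (tree_measurable (mu := mu) htree TI).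
have muI : mu I \is a fin_num := fin_num_measure mu _ mI.
have muI0 : (0 < fine (mu I))%R.
  by rewrite fine_gt0 // (tree_measure_gt0 (mu := mu) htree TI) ltey_eq muI.
by rewrite /tree_avg lte_pdivlMl // (fineK muI) muleC => /ltW.
Qed.

Hypothesis mphi : measurable_fun setT phi.

Lemma tree_maximal_weak_type (lam : R) : (0 <= lam)%R ->
  lam%:E * mu [set x | lam%:E < `|tree_maximal mu Tr phi x|] <=
  \int[mu]_(y in [set x | lam%:E < `|tree_maximal mu Tr phi x|]) (`|phi y|)%:E.
Proof.
move=> lam0; rewrite tree_maximal_superlevel.
set G := [set I | Tr I /\ lam%:E < tree_avg I].
have GTr : G `<=` Tr by move=> I [].
have -> : \bigcup_(I in G) I = \bigcup_(I in maximal_in G) I.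
  apply/seteqP; split => [x [I GI Ix]|x [I [GI _] Ix]]; last by exists I.
  have [J MJ IJ] := tree_maximal_in_ub htree GTr GI.
  by exists J => //; exact: IJ.
apply: mule_measure_bigcup_le_integral => //.
- by apply/measurable_EFinP; apply: measurableT_comp.
- apply: sub_countable (countable_tree htree).
  by apply: subset_card_le => I [/GTr].
- by move=> I [/GTr TI _]; exact: (tree_measurable (mu := mu) htree TI).
- move=> I J MI MJ.
  exact: (maximal_in_null_inter (mu := mu) htree GTr MI MJ).
- by move=> I [[TI lI] _]; exact: tree_avg_gt_le_integral.
Qed.

Lemma weak_norm_tree_maximal_le (p : R) : (0 < p)%R ->
  weak_norm mu p (tree_maximal mu Tr phi) <= triple_norm mu p phi.
Proof.
move=> p0; apply: ge_ereal_sup => _ [lam lam0 <-].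
set S := [set x | _ < _].
have mS : measurable S := measurable_tree_maximal_superlevel lam.
have muS : mu S \is a fin_num := fin_num_measure mu _ mS.
have [S0|S0] := eqVneq (mu S) 0.
  rewrite S0 /= powR0 ?mulr0; last by rewrite invr_eq0 gt_eqF.
  apply: le_trans (ereal_sup_ubound _); last first.
    exists setT => //; split => //.
    exact: (tree_measure_gt0 (mu := mu) htree (tree_setT htree)).
  by rewrite mule_ge0 ?lee_fin ?powR_ge0 // integral_ge0.
have tS : (0 < fine (mu S))%R.
  by apply: fine_gt0; rewrite lt0e S0 measure_ge0 ltey_eq muS.
apply: le_trans (ereal_sup_ubound _); last first.
  by exists S => //; split => //; rewrite lt0e S0 measure_ge0.
apply: le_trans (lee_wpmul2l _ (tree_maximal_weak_type (ltW lam0)));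
  last by rewrite lee_fin powR_ge0.
by rewrite -/S -(fineK muS) -!EFinM lee_fin mulrCA powR_addN1_mul.
Qed.

End tree_maximal.

Section step_fun.
Context {d : measure_display} {T : measurableType d} {R : realType}.
Variable mu : {measure set T -> \bar R}.
Variables (A : set T) (b c : R).
Hypothesis mA : measurable A.
Hypothesis bc : 0 <= b <= c.

Definition step_fun (x : T) : R := b + (c - b) * \1_A x.

Lemma step_fun_ge0 x : 0 <= step_fun x.
Proof. by case/andP: bc => b0 bc'; rewrite addr_ge0 ?mulr_ge0 ?subr_ge0. Qed.

Lemma measurable_step_fun : measurable_fun setT step_fun.
Proof. by apply: measurable_funD => //; apply: measurable_funM. Qed.

Lemma integral_step_fun E : measurable E ->
  (\int[mu]_(x in E) (step_fun x)%:E =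
     b%:E * mu E + (c - b)%:E * mu (A `&` E))%E.
Proof.
move=> mE; case/andP: bc => b0 bc'.
rewrite (eq_integral (fun x => b%:E + (c - b)%:E * (\1_A x)%:E)%E); last first.
  by move=> x _; rewrite EFinD EFinM.
have mi : measurable_fun E (fun x => (\1_A x : R)%:E).
  by apply/measurable_EFinP; apply: measurable_funTS; exact: measurable_indic.
rewrite ge0_integralD //; last 2 first.
- by move=> x _; rewrite mule_ge0 ?lee_fin ?subr_ge0.
- exact: emeasurable_funM.
rewrite integral_cst // ge0_integralZl ?lee_fin ?subr_ge0 //.
by rewrite integral_indic.
Qed.

End step_fun.

Section bellman.
Context {d : measure_display} {T : measurableType d} {R : realType}.
Variables (mu : probability T R) (Tr : set (set T)).
Variable C : set T -> set (set T).
Hypothesis htree : is_tree mu Tr C.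
Variables (p f F : R).
Hypothesis p1 : 1 < p.

Let p0 : 0 < p. Proof. exact: lt_trans p1. Qed.

Lemma bellmanB_le : (bellmanB mu Tr p f F <= F%:E)%E.
Proof.
apply: ge_ereal_sup => _ [phi [/integrableP[mphi _] _ _ <-] <-].
apply: (weak_norm_tree_maximal_le htree) p0.
exact/measurable_EFinP.
Qed.

Hypotheses (f0 : 0 < f) (fF : f <= F).
Variable A : set T.
Hypothesis TA : Tr A.
Let a := fine (mu A).
Hypotheses (a1 : a < 1) (af : a `^ (1 - p^-1) <= f / F).

(* With [c] the set A is extremal for the triple norm: a^(-1+1/p) (c a) = F;
   the value [b] off A is then forced by the total integral f. *)
Let c := F * a `^ (- p^-1).
Let b := (f - c * a) / (1 - a).
Let phi := step_fun A b c.

Let mA : measurable A := tree_measurable htree TA.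
Let muA : mu A = a%:E.
Proof. by rewrite /a fineK // fin_num_measure. Qed.
Let a0 : 0 < a.
Proof. by rewrite -lte_fin -muA; exact: (tree_measure_gt0 htree TA). Qed.
Let F0 : 0 < F. Proof. exact: lt_le_trans fF. Qed.

Let cF : c * a `^ p^-1 = F.
Proof. by rewrite -mulrA -powRD ?addNr ?powRr0 ?mulr1 // (gt_eqF a0) implybT. Qed.

Let ca : c * a = F * a `^ (1 - p^-1).
Proof.
rewrite -mulrA -{2}(powRr1 (ltW a0)) -powRD; last by rewrite (gt_eqF a0) implybT.
by rewrite addrC.
Qed.

Let ef : b * (1 - a) = f - c * a.
Proof. by rewrite /b divfK // subr_eq0 gt_eqF. Qed.

Let bc : 0 <= b <= c.
Proof.
have ca_f : c * a <= f by rewrite ca mulrC -ler_pdivlMr.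
have Fc : F <= c.
  rewrite /c ler_peMr ?(ltW F0) // -(powRr0 a) ger_powR ?a0 ?(ltW a1) //.
  by rewrite oppr_le0 invr_ge0 ltW.
have a1' : 0 < 1 - a by rewrite subr_gt0.
apply/andP; split; first by rewrite divr_ge0 ?subr_ge0 // ltW.
rewrite /b ler_pdivrMr //.
by rewrite mulrBr mulr1 lerD2r (le_trans fF).
Qed.

Let fine_measure_le E1 E2 : measurable E1 -> measurable E2 -> E1 `<=` E2 ->
  fine (mu E1) <= fine (mu E2).
Proof.
move=> mE1 mE2 E12.
by apply: fine_le; rewrite ?fin_num_measure ?le_measure ?inE.
Qed.

Let r01 : 0 < p^-1 < 1.
Proof. by rewrite invr_gt0 p0 invf_lt1. Qed.

Let bF : b * (1 - a) <= F - c * a.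
Proof. by rewrite ef lerD2r. Qed.

Let c0 : 0 < c.
Proof. by rewrite mulr_gt0 ?powR_gt0. Qed.

Let abs_phi x : `|phi x| = phi x.
Proof. exact/ger0_norm/step_fun_ge0. Qed.

Let integral_phi E : measurable E ->
  (\int[mu]_(x in E) (`|phi x|)%:E =
     b%:E * mu E + (c - b)%:E * mu (A `&` E))%E.
Proof.
by move=> mE; under eq_integral do rewrite abs_phi; exact: integral_step_fun.
Qed.

Let avg_phi : tree_avg mu phi A = c%:E.
Proof.
rewrite /tree_avg integral_phi // setIid muA -!EFinM.
rewrite -/a; congr EFin; field; exact: lt0r_neq0.
Qed.

Lemma step_fun_triple_norm : triple_norm mu p phi = F%:E.
Proof.
apply/eqP; rewrite eq_le; apply/andP; split.
  apply: ge_ereal_sup => _ [E [mE E0] <-].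
  have mAE : measurable (A `&` E) by exact: measurableI.
  rewrite integral_phi // -(fineK (fin_num_measure mu _ mE)).
  rewrite -(fineK (fin_num_measure mu _ mAE)) -!EFinM lee_fin.
  set t := fine (mu E); set s := fine (mu (A `&` E)).
  have t0 : 0 < t by apply: fine_gt0; rewrite E0 ltey_eq fin_num_measure.
  have t1 : t <= 1.
    have := fine_measure_le mE measurableT (@subsetT _ E).
    by rewrite probability_setT.
  have a01 : 0 < a < 1 by rewrite a0 a1.
  have t01 : 0 < t <= 1 by rewrite t0 t1.
  have sE := fine_measure_le mAE mE (@subIsetr _ _ _).
  have sA := fine_measure_le mAE mA (@subIsetl _ _ _).
  have := step_mass_le r01 a01 t01 (fine_ge0 (measure_ge0 _ _)) sE sA bc cF ca bF.
  rewrite -/s => /(ler_wpM2l (powR_ge0 t (-1 + p^-1))) /le_trans; apply.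
  rewrite mulrCA -powRD; last by rewrite (gt_eqF t0) implybT.
  by rewrite (_ : -1 + p^-1 + (1 - p^-1) = 0) ?powRr0 ?mulr1 //; ring.
apply: le_trans (ereal_sup_ubound _); last first.
  by exists A => //; split => //; exact: (tree_measure_gt0 htree TA).
rewrite integral_phi // setIid muA -!EFinM lee_fin -/a.
rewrite (_ : b * a + (c - b) * a = c * a); last by ring.
by rewrite mulrCA powR_addN1_mul // cF.
Qed.

Lemma step_fun_weak_norm : (F%:E <= weak_norm mu p (tree_maximal mu Tr phi))%E.
Proof.
apply/lee_mul01Pr; first by rewrite lee_fin ltW.
move=> r /andP[r0 r1]; rewrite -cF -EFinM mulrA.
set S := [set x | ((r * c)%:E < `|tree_maximal mu Tr phi x|)%E].
have mS : measurable S := measurable_tree_maximal_superlevel htree phi (r * c).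
have AS : A `<=` S.
  move=> x Ax; rewrite /S (tree_maximal_superlevel htree).
  by exists A => //; split => //; rewrite [tree_avg _ _ _]avg_phi lte_fin gtr_pMl.
apply: le_trans (ereal_sup_ubound _); last first.
  by exists (r * c) => //=; rewrite mulr_gt0.
rewrite lee_fin ler_wpM2l ?(ltW (mulr_gt0 r0 c0)) // -/a.
have ip0 : 0 <= p^-1 by rewrite invr_ge0 ltW.
apply: (ge0_ler_powR ip0).
- by rewrite nnegrE ltW.
- by rewrite nnegrE fine_ge0.
- exact: fine_measure_le mA mS AS.
Qed.

Lemma bellmanB_ge : (F%:E <= bellmanB mu Tr p f F)%E.
Proof.
apply: le_trans step_fun_weak_norm _; apply: ereal_sup_ubound.
have int_phi : (\int[mu]_x (phi x)%:E = f%:E)%E.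
  under eq_integral do rewrite -abs_phi.
  rewrite integral_phi // setIT muA probability_setT !mule1 -!EFinM -EFinD.
  by congr EFin; have := ef; lra.
exists phi => //; split => //.
- apply/integrableP; split.
    by apply/measurable_EFinP; exact: measurable_step_fun.
  by under eq_integral do rewrite /= abs_phi; rewrite int_phi ltey.
- by move=> x; exact: step_fun_ge0 bc x.
- exact: step_fun_triple_norm.
Qed.

End bellman.

Unset Implicit Arguments.

Theorem corollary3p2 (d : measure_display) (T : measurableType d)
    (R : realType) (mu : probability T R) (Tr : set (set T))
    (C : set T -> set (set T)) (p f F : R) :
  nonatomic mu -> is_tree mu Tr C -> 1 < p -> 0 < f -> f <= F ->
  bellmanB mu Tr p f F = F%:E.
Proof.
move=> _ htree p1 f0 fF.
apply/eqP; rewrite eq_le (bellmanB_le htree _ _ p1) //=.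
have q0 : 0 < 1 - p^-1 by rewrite subr_gt0 invf_lt1 // (lt_trans ltr01).
have fF01 : 0 < f / F <= 1.
  have F0 : 0 < F := lt_le_trans f0 fF.
  by rewrite divr_gt0 //= ler_pdivrMr ?mul1r.
have [A [TA a1 af]] := tree_small_powR htree q0 fF01.
exact: (bellmanB_ge htree p1 f0 fF TA a1 af).
Qed.
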